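(* Let $\Omega$ be a pointed solid closed convex cone in a finite-dimensional real inner product space $X$ with $\Omega^*$ facially compact and locally smooth, $1\le j\le d$, and $(E,F)\in\mathcal P_j$. Then the orthogonal projection $p$ of $X$ onto $E_{1/2}(F)$ is injective on some neighbourhood of $e_F(E)$ in $\mathbf e(\xi^{-1}(E))=\{e_G(E):(E,G)\in\mathcal P_j\}$.
   Context: $A^*=\{y:\langle y,a\rangle\ge0\ \forall a\in A\}$, $A^\circledast=A^*\cap\operatorname{span}A$. Faces: subsets $F$ of a convex set such that every segment with midpoint in $F$ lies in $F$. $0=n_0<\dots<n_d=\dim X$ are the dimensions of faces of $\Omega^*$, $P_j$ the faces of dimension $n_{d-j}$ with the Fell topology; facially compact: each $P_j$ compact. Modular face of a cone $C$: a face $E$ containing a face of dimension $\max\{\dim G:G\text{ face of }C,\dim G<\dim E\}$; smooth: the relative interiors of those maximal-dimensional proper faces consist of regular points of $E$; locally smooth: all modular faces smooth. $\mathcal P_j=\{(E,F)\in P_{j-1}\times P_j:E\supset F\}$, $\xi(E,F)=E$; $e_F(E)$ is the unit generator of the extreme ray $F^\perp\cap E^\circledast$ of $E^\circledast$; $E_{1/2}(F)=\operatorname{span}(E)\cap F^\perp\cap e_F(E)^\perp$. *)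

(* X = 'rV[R]_n with the standard
   inner product (every finite-dimensional real inner product space is
   isometric to such a space). *)
From mathcomp Require Import all_boot all_order all_algebra.
From mathcomp Require Import all_classical all_reals all_analysis.
Import Order.TTheory GRing.Theory Num.Theory.
Import numFieldNormedType.Exports.
Set Implicit Arguments.
Unset Strict Implicit.
Unset Printing Implicit Defensive.
Local Open Scope ring_scope.
Local Open Scope classical_set_scope.

Definition dot (R : realType) (n : nat) (u v : 'rV[R]_n) : R := (u *m v^T) 0 0.

Definition span (R : realType) (n : nat) (S : set 'rV[R]_n) : set 'rV[R]_n :=
  [set v | exists (k : nat) (c : 'I_k -> R) (w : 'I_k -> 'rV[R]_n),
      (forall i, S (w i)) /\ v = \sum_(i < k) c i *: w i].

Definition has_dim (R : realType) (n : nat) (S : set 'rV[R]_n) (k : nat) : Prop :=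
  exists A : 'M[R]_(k, n), (forall i, S (row i A)) /\ \rank A = k /\
     (forall v, S v -> (v <= A)%MS).

Definition dimS (R : realType) (n : nat) (S : set 'rV[R]_n) : nat :=
  xget 0%N [set k | has_dim S k].

Definition convex_set (R : realType) (n : nat) (S : set 'rV[R]_n) : Prop :=
  forall x y (t : R), S x -> S y -> 0 <= t -> t <= 1 -> S (t *: x + (1 - t) *: y).

Definition convex_cone (R : realType) (n : nat) (S : set 'rV[R]_n) : Prop :=
  S 0 /\ (forall x y, S x -> S y -> S (x + y)) /\
  (forall (t : R) x, 0 <= t -> S x -> S (t *: x)).

Definition pointed_set (R : realType) (n : nat) (S : set 'rV[R]_n) : Prop :=
  forall x, S x -> S (- x) -> x = 0.

Definition solid (R : realType) (n : nat) (S : set 'rV[R]_n) : Prop :=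
  (S°) !=set0.

Definition is_face (R : realType) (n : nat) (C F : set 'rV[R]_n) : Prop :=
  F `<=` C /\ F !=set0 /\ convex_set F /\
  forall x y, C x -> C y -> F ((2^-1 : R) *: (x + y)) ->
    forall t : R, 0 <= t -> t <= 1 -> F (t *: x + (1 - t) *: y).

Definition dual (R : realType) (n : nat) (A : set 'rV[R]_n) : set 'rV[R]_n :=
  [set y | forall a, A a -> 0 <= dot y a].
Definition dualspan (R : realType) (n : nat) (A : set 'rV[R]_n) : set 'rV[R]_n :=
  dual A `&` span A.
Definition perp (R : realType) (n : nat) (A : set 'rV[R]_n) : set 'rV[R]_n :=
  [set y | forall a, A a -> dot y a = 0].

(* the increasing list 0 = n_0 < ... < n_d of dimensions of faces of C *)
Definition face_dims (R : realType) (n : nat) (C : set 'rV[R]_n) : seq nat :=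
  [seq k <- iota 0 n.+1 | `[< exists G, is_face C G /\ dimS G = k >] ].
Definition dd (R : realType) (n : nat) (C : set 'rV[R]_n) : nat :=
  (size (face_dims C)).-1.
Definition ndim (R : realType) (n : nat) (C : set 'rV[R]_n) (i : nat) : nat :=
  nth 0%N (face_dims C) i.

Definition Pj (R : realType) (n : nat) (C : set 'rV[R]_n) (j : nat)
  : set (set 'rV[R]_n) :=
  [set G | is_face C G /\ dimS G = ndim C (dd C - j)].

Definition calP (R : realType) (n : nat) (C : set 'rV[R]_n) (j : nat)
  : set (set 'rV[R]_n * set 'rV[R]_n) :=
  [set EF | Pj C j.-1 EF.1 /\ Pj C j EF.2 /\ EF.2 `<=` EF.1].

Definition fell_subbasic (R : realType) (n : nat) (S : set (set 'rV[R]_n)) : Prop :=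
  (exists K : set 'rV[R]_n, compact K /\ S = [set A | A `&` K = set0]) \/
  (exists U : set 'rV[R]_n, open U /\ S = [set A | A `&` U !=set0]).

Definition fell_open (R : realType) (n : nat) (O : set (set 'rV[R]_n)) : Prop :=
  forall A, O A -> exists (k : nat) (S : 'I_k -> set (set 'rV[R]_n)),
    (forall i, fell_subbasic (S i)) /\ (forall i, S i A) /\
    (forall B, (forall i, S i B) -> O B).

Definition fell_compact (R : realType) (n : nat) (P : set (set 'rV[R]_n)) : Prop :=
  forall (I : Type) (O : I -> set (set 'rV[R]_n)),
    (forall i, fell_open (O i)) -> (forall A, P A -> exists i, O i A) ->
    exists (k : nat) (f : 'I_k -> I), forall A, P A -> exists m, O (f m) A.

Definition facially_compact (R : realType) (n : nat) (C : set 'rV[R]_n) : Prop :=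
  forall j, (j <= dd C)%N -> fell_compact (Pj C j).

(* relative interior of a convex set G (in its affine = linear span, G a cone face) *)
Definition relint (R : realType) (n : nat) (G : set 'rV[R]_n) : set 'rV[R]_n :=
  [set x | G x /\ exists eps : R, 0 < eps /\
     forall y, span G y -> dot (y - x) (y - x) < eps -> G y].

(* regular point of a cone E: E has a unique supporting hyperplane at x
   (inside span E), i.e. the normal cone {y in E^⊛ | <y,x> = 0} is one ray *)
Definition regular (R : realType) (n : nat) (E : set 'rV[R]_n) (x : 'rV[R]_n) : Prop :=
  E x /\ exists u : 'rV[R]_n, u != 0 /\
    forall y, (dualspan E y /\ dot y x = 0) <-> exists t : R, 0 <= t /\ y = t *: u.

Definition modular (R : realType) (n : nat) (C E : set 'rV[R]_n) : Prop :=
  is_face C E /\ exists G, is_face C G /\ G `<=` E /\ (dimS G < dimS E)%N /\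
    forall G', is_face C G' -> (dimS G' < dimS E)%N -> (dimS G' <= dimS G)%N.

Definition max_proper_face (R : realType) (n : nat) (E G : set 'rV[R]_n) : Prop :=
  is_face E G /\ G <> E /\
  forall G', is_face E G' -> G' <> E -> (dimS G' <= dimS G)%N.

Definition smooth (R : realType) (n : nat) (E : set 'rV[R]_n) : Prop :=
  forall G, max_proper_face E G -> forall x, relint G x -> regular E x.

Definition locally_smooth (R : realType) (n : nat) (C : set 'rV[R]_n) : Prop :=
  forall E, modular C E -> smooth E.

Definition eF (R : realType) (n : nat) (E F : set 'rV[R]_n) : 'rV[R]_n :=
  xget 0 [set e | dot e e = 1 /\
    forall y, (perp F y /\ dualspan E y) <-> exists t : R, 0 <= t /\ y = t *: e].

Definition Ehalf (R : realType) (n : nat) (E F : set 'rV[R]_n) : set 'rV[R]_n :=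
  [set v | span E v /\ perp F v /\ dot v (eF E F) = 0].

Definition oproj (R : realType) (n : nat) (V : set 'rV[R]_n) (x : 'rV[R]_n) : 'rV[R]_n :=
  xget 0 [set p | V p /\ forall v, V v -> dot (x - p) v = 0].

Definition eset (R : realType) (n : nat) (C : set 'rV[R]_n) (j : nat) (E : set 'rV[R]_n)
  : set 'rV[R]_n :=
  [set eF E G | G in [set G | calP C j (E, G)]].

From Pilot Require Import Defs.
From mathcomp Require Import all_boot all_order all_algebra.
From mathcomp Require Import all_classical all_reals all_analysis.
From mathcomp Require Import lra zify.
Import Order.TTheory GRing.Theory Num.Theory.
Import numFieldNormedType.Exports.
Set Implicit Arguments.
Unset Strict Implicit.
Unset Printing Implicit Defensive.
Local Open Scope ring_scope.
Local Open Scope classical_set_scope.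

(* Write e = e_F(E) and suppose the projection is not injective near e: there are
   unit generators x_i <> y_i of rays F^⊥ ∩ E^⊛ (for faces G_i, H_i in P_j), both
   converging to e, whose difference is orthogonal to E_{1/2}(F).  A cluster point u
   of the normalized differences is a unit vector of span E orthogonal to E_{1/2}(F).
   It is orthogonal to e as well, since x_i and y_i are unit vectors, and to F: the
   difference is <= 0 on G_i and >= 0 on H_i, while Fell compactness of P_j forces
   every face of P_j whose generator is close to e to pass close to each point of F
   (a face avoiding a neighbourhood of that point either leaves span E or contains a
   point of E outside F = E ∩ e^⊥).  Hence u lies in E_{1/2}(F) and is orthogonal to
   itself, a contradiction. *)

Section InnerProduct.
Variables (R : realType) (n : nat).
Implicit Types (u v w : 'rV[R]_n) (a : R).

Lemma dotE u v : dot u v = \sum_j u 0 j * v 0 j.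
Proof. by rewrite /dot !mxE; apply: eq_bigr => j _; rewrite !mxE. Qed.

Lemma dotC u v : dot u v = dot v u.
Proof. by rewrite !dotE; apply: eq_bigr => j _; rewrite mulrC. Qed.

Lemma dotDl u v w : dot (u + v) w = dot u w + dot v w.
Proof. by rewrite !dotE -big_split; apply: eq_bigr => j _; rewrite !mxE mulrDl. Qed.

Lemma dotZl a u w : dot (a *: u) w = a * dot u w.
Proof. by rewrite !dotE mulr_sumr; apply: eq_bigr => j _; rewrite !mxE mulrA. Qed.

Lemma dotNl u w : dot (- u) w = - dot u w.
Proof. by rewrite -scaleN1r dotZl mulN1r. Qed.

Lemma dotBl u v w : dot (u - v) w = dot u w - dot v w.
Proof. by rewrite dotDl dotNl. Qed.

Lemma dot0l w : dot 0 w = 0.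
Proof. by rewrite -(scale0r 0) dotZl mul0r. Qed.

Lemma dotDr u v w : dot w (u + v) = dot w u + dot w v.
Proof. by rewrite dotC dotDl !(dotC w). Qed.

Lemma dotZr a u w : dot w (a *: u) = a * dot w u.
Proof. by rewrite dotC dotZl dotC. Qed.

Lemma dotNr u w : dot w (- u) = - dot w u.
Proof. by rewrite dotC dotNl dotC. Qed.

Lemma dotBr u v w : dot w (u - v) = dot w u - dot w v.
Proof. by rewrite dotDr dotNr. Qed.

Lemma dot0r w : dot w 0 = 0.
Proof. by rewrite dotC dot0l. Qed.

Lemma dot_suml k (c : 'I_k -> R) (w : 'I_k -> 'rV[R]_n) v :
  dot (\sum_(i < k) c i *: w i) v = \sum_(i < k) c i * dot (w i) v.
Proof.
elim/big_rec2: _ => [|i y1 y2 _ <-]; first by rewrite dot0l.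
by rewrite dotDl dotZl.
Qed.

Lemma dot_row k v (A : 'M[R]_(k, n)) i : dot v (row i A) = (v *m A^T) 0 i.
Proof. by rewrite dotE !mxE; apply: eq_bigr => j _; rewrite !mxE. Qed.

Lemma dotxx_ge0 v : 0 <= dot v v.
Proof. by rewrite dotE sumr_ge0 // => j _; rewrite -expr2 sqr_ge0. Qed.

Lemma dotxx_eq0 v : dot v v = 0 -> v = 0.
Proof.
rewrite dotE => /eqP; rewrite psumr_eq0; last by move=> j _; rewrite -expr2 sqr_ge0.
move=> /allP v0; apply/rowP => j; rewrite mxE.
by have := v0 j (mem_index_enum j); rewrite mulf_eq0 orbb => /eqP.
Qed.

Lemma normalize_unit v : v != 0 ->
  dot ((Num.sqrt (dot v v))^-1 *: v) ((Num.sqrt (dot v v))^-1 *: v) = 1.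
Proof.
move=> v0; have vv0 : 0 < dot v v.
  by rewrite lt_def dotxx_ge0 andbT; apply: contra v0 => /eqP/dotxx_eq0 ->.
by rewrite dotZl dotZr mulrA -expr2 exprVn sqr_sqrtr ?ltW // mulVf ?gt_eqF.
Qed.

Lemma ler_coord_norm v j : `|v 0 j| <= `|v|.
Proof.
change (`|v 0 j| <= mx_norm v); rewrite mx_normrE.
exact: (le_bigmax 0 (fun ij : 'I_1 * 'I_n => `|v ij.1 ij.2|) (0, j)).
Qed.

(* [`|v|] is the sup norm [mx_norm], hence the factor [n]. *)
Lemma ler_norm_dot u v : `|dot u v| <= n%:R * (`|u| * `|v|).
Proof.
rewrite dotE (le_trans (ler_norm_sum _ _ _)) //.
rewrite (_ : _ * _ = \sum_(j < n) (`|u| * `|v|)).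
  by apply: ler_sum => j _; rewrite normrM ler_pM ?ler_coord_norm.
by rewrite sumr_const card_ord mulr_natl.
Qed.

Lemma dotxx_le_norm v : dot v v <= n%:R * `|v| ^+ 2.
Proof. by have := ler_norm_dot v v; rewrite ger0_norm ?dotxx_ge0 // expr2. Qed.

Lemma unit_norm_le1 v : dot v v = 1 -> `|v| <= 1.
Proof.
move=> v1; change (mx_norm v <= 1).
have [->|/mx_norm_neq0 [[i j] ->]] := eqVneq (mx_norm v) 0; first exact: ler01.
rewrite (ord1 i) -(@ler_pXn2r _ 2) ?nnegrE // expr1n real_normK ?num_real //.
by rewrite -v1 dotE (bigD1 j) //= -expr2 lerDl sumr_ge0 // => k _; rewrite -expr2 sqr_ge0.
Qed.

Lemma ler_norm_dot_unit u v : dot u u = 1 -> `|dot u v| <= n%:R * `|v|.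
Proof.
move=> u1; apply: le_trans (ler_norm_dot u v) _.
by rewrite ler_wpM2l // ler_piMl // unit_norm_le1.
Qed.

Lemma ler_norm_dot_unit_small u v eta : dot u u = 1 -> `|v| < eta / n.+1%:R ->
  `|dot u v| <= eta.
Proof.
move=> u1 v_small; have eta0 : 0 < eta.
  by rewrite -(@pmulr_lgt0 _ n.+1%:R^-1) ?invr_gt0 // (le_lt_trans _ v_small).
apply: le_trans (ler_norm_dot_unit v u1) _.
apply: le_trans (_ : n%:R * (eta / n.+1%:R) <= eta).
  by rewrite ler_wpM2l // ltW.
by rewrite mulrCA ger_pMr // ler_pdivrMr // mul1r ler_nat.
Qed.

Lemma continuous_dot (f g : 'rV[R]_n -> 'rV[R]_n) :
  continuous f -> continuous g -> continuous (fun v => dot (f v) (g v)).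
Proof.
move=> cf cg; rewrite (_ : (fun v => _) = (fun v => \sum_j f v 0 j * g v 0 j)).
  apply: continuous_big => [[a b]|j _ v]; first exact: (@add_continuous R^o (a, b)).
  apply: continuousM.
    exact: (continuous_comp (cf v) (@coord_continuous _ _ _ 0 j (f v))).
  exact: (continuous_comp (cg v) (@coord_continuous _ _ _ 0 j (g v))).
by apply/funext => ?; rewrite dotE.
Qed.

Lemma continuous_dotl w : continuous (fun v => dot v w).
Proof.
apply: continuous_dot => v; first exact: (@cvg_id _ (nbhs v)).
by apply: cvg_cst; exact: nbhs_filter.
Qed.

End InnerProduct.

Section Subspaces.
Variables (R : realType) (n : nat).
Implicit Types (S T V : set 'rV[R]_n) (v w x y : 'rV[R]_n).

Lemma mem_span S v : S v -> Defs.span S v.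
Proof. by exists 1%N, (fun=> 1), (fun=> v); rewrite big_ord1 scale1r. Qed.

Lemma span_submxP k S (A : 'M[R]_(k, n)) :
  (forall i, S (row i A)) -> (forall v, S v -> (v <= A)%MS) ->
  forall v, Defs.span S v <-> (v <= A)%MS.
Proof.
move=> SA AS v; split.
  move=> [m [c [w [Sw ->]]]]; apply: summx_sub => i _.
  by apply: scalemx_sub; exact: AS.
move=> /submxP [u ->]; exists k, (u 0), (fun i => row i A); split => //.
exact: mulmx_sum_row.
Qed.

Lemma perp_submxP k S (A : 'M[R]_(k, n)) :
  (forall i, S (row i A)) -> (forall v, S v -> (v <= A)%MS) ->
  forall v, perp S v <-> v *m A^T = 0.
Proof.
move=> SA AS v; split.
  by move=> vS; apply/rowP => i; rewrite [RHS]mxE -dot_row; exact: vS (SA i).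
by move=> vA a /AS /submxP [c ->]; rewrite /dot trmx_mul mulmxA vA mul0mx mxE.
Qed.

Lemma has_dim_exists S : exists k, has_dim S k.
Proof.
pose P k := `[< exists A : 'M[R]_(k, n), (forall i, S (row i A)) /\ \rank A = k >].
have P0 : P 0%N by apply/asboolP; exists 0; split => [[]|]; rewrite ?mxrank0.
have Pn k : P k -> (k <= n)%N by move=> /asboolP [A [_ <-]]; exact: rank_leq_col.
have [k /asboolP [A [SA rkA]] kmax] := ex_maxnP (ex_intro P 0%N P0) Pn.
exists k, A; split => //; split => // v Sv; apply/negP => vA.
suff /kmax : P (k + 1)%N by rewrite addn1 ltnn.
apply/asboolP; exists (col_mx A v); split.
  move=> i; rewrite -[i]splitK; case: (fintype.split i) => i'.
    by rewrite /= rowKu.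
  by rewrite /= rowKd (ord1 i') row_id.
apply/eqP; rewrite eqn_leq rank_leq_row /= -addsmxE addn1 -{1}rkA ltn_neqAle.
rewrite (mxrank_leqif_sup (addsmxSl A v)) addsmx_sub submx_refl /=.
by rewrite mxrankS ?addsmxSl // andbT; exact/negP.
Qed.

Lemma dimS_spec S : has_dim S (dimS S).
Proof. by apply: xgetPex; exact: has_dim_exists. Qed.

Lemma le_dimS S T : S `<=` T -> (dimS S <= dimS T)%N.
Proof.
move=> ST; have [A [SA [rkA _]]] := dimS_spec S; have [B [_ [rkB TB]]] := dimS_spec T.
rewrite -rkA -rkB; apply: mxrankS; apply/row_subP => i; apply: TB; exact: ST.
Qed.

Lemma dimS_le S : (dimS S <= n)%N.
Proof. by have [A [_ [rkA _]]] := dimS_spec S; rewrite -rkA rank_leq_col. Qed.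

Lemma span_mx S : exists A : 'M[R]_(dimS S, n), forall v, Defs.span S v <-> (v <= A)%MS.
Proof. by have [A [SA [_ AS]]] := dimS_spec S; exists A; exact: span_submxP. Qed.

Lemma submx_dot_cokerP k v (A : 'M[R]_(k, n)) :
  (v <= A)%MS <-> forall l, dot v (col l (cokermx A))^T = 0.
Proof.
have dotE l : dot v (col l (cokermx A))^T = (v *m cokermx A) 0 l.
  by rewrite dotE !mxE; apply: eq_bigr => i _; rewrite !mxE.
rewrite submxE; split => [/eqP vA l|vA]; first by rewrite dotE vA mxE.
by apply/eqP/rowP => l; rewrite -dotE vA mxE.
Qed.

Lemma closed_span S : closed (Defs.span S).
Proof.
have [A spanA] := span_mx S.
rewrite (_ : Defs.span S = \bigcap_(l in setT) [set v | dot v (col l (cokermx A))^T = 0]).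
  apply: closed_bigI => l _.
  apply: (@preimage_closed _ R^o (fun v => dot v _) [set 0]); last exact: closed_eq.
  by move=> v _; exact: continuous_dotl.
apply/seteqP; split => v; rewrite /= spanA submx_dot_cokerP; first by move=> vA l _.
by move=> vA l; exact: vA.
Qed.

Lemma oproj_spec k V (M : 'M[R]_(k, n)) x : (forall v, V v <-> (v <= M)%MS) ->
  V (oproj V x) /\ forall v, V v -> dot (x - oproj V x) v = 0.
Proof.
move=> VM; apply: (@xgetPex _ 0 [set p | V p /\ forall v, V v -> dot (x - p) v = 0]).
have [B fB eqB] : exists2 B : 'M[R]_(\rank M, n), row_free B & (B :=: M)%MS.
  by exists (row_base M); [exact: row_base_free | exact: eq_row_base].
have BBu : B *m B^T \in unitmx.
  rewrite -row_free_unit -kermx_eq0; apply/eqP/row_matrixP => i; rewrite row0.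
  set c := row i _; have cBB : c *m (B *m B^T) = 0 by rewrite -row_mul mulmx_ker row0.
  suff /eqP : c *m B = 0 by rewrite (mulmx_free_eq0 _ fB) => /eqP.
  by apply: dotxx_eq0; rewrite /dot trmx_mul mulmxA -(mulmxA c) cBB mul0mx mxE.
exists (x *m B^T *m invmx (B *m B^T) *m B); split.
  by apply/VM; rewrite (submx_trans (submxMl _ _)) // eqB.
move=> v /VM; rewrite -eqB => /submxP [c ->].
rewrite /dot trmx_mul mulmxA mulmxBl -(mulmxA _ B) -(mulmxA (x *m B^T)).
by rewrite mulVmx // mulmx1 subrr mul0mx mxE.
Qed.

Lemma oproj_eq_perp k V (M : 'M[R]_(k, n)) x y w : (forall v, V v <-> (v <= M)%MS) ->
  oproj V x = oproj V y -> V w -> dot (x - y) w = 0.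
Proof.
move=> VM xy Vw; have [_ xV] := oproj_spec x VM; have [_ yV] := oproj_spec y VM.
have -> : x - y = (x - oproj V x) - (y - oproj V y) by rewrite xy opprB addrA subrK.
by rewrite dotBl xV // yV // subrr.
Qed.

Lemma Ehalf_mx (E F : set 'rV[R]_n) :
  exists M : 'M[R]_n, forall v, Ehalf E F v <-> (v <= M)%MS.
Proof.
have [AE [SE [_ ES]]] := dimS_spec E; have [AF [SF [_ FS]]] := dimS_spec F.
exists (AE :&: (kermx AF^T :&: kermx (eF E F)^T))%MS => v.
rewrite !sub_capmx !sub_kermx; split => [[vE [vF ve]]|/and3P [vE /eqP vF /eqP ve]].
  apply/and3P; split; first exact/(span_submxP SE ES).
    exact/eqP/(perp_submxP SF FS).
  by apply/eqP/rowP => i; rewrite (ord1 i) [RHS]mxE.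
split; first exact/(span_submxP SE ES).
by split; [exact/(perp_submxP SF FS) | rewrite /dot ve mxE].
Qed.

End Subspaces.

Section Faces.
Variables (R : realType) (n : nat).
Implicit Types (C E F G H : set 'rV[R]_n) (x y z : 'rV[R]_n).

Lemma convex_cone_dual C : convex_cone (Defs.dual C).
Proof.
split; first by move=> a _; rewrite dot0l.
split; first by move=> x y Cx Cy a Ca; rewrite dotDl addr_ge0 ?Cx ?Cy.
by move=> t x t0 Cx a Ca; rewrite dotZl mulr_ge0 ?Cx.
Qed.

Lemma cone_sum C k (c : 'I_k -> R) (w : 'I_k -> 'rV[R]_n) :
  convex_cone C -> (forall i, 0 <= c i) -> (forall i, C (w i)) ->
  C (\sum_(i < k) c i *: w i).
Proof.
move=> [C0 [CD CZ]] c0 Cw.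
by elim/big_rec: _ => // i x _ Cx; apply: CD => //; exact: CZ.
Qed.

Lemma face_midpointl C G x y :
  is_face C G -> C x -> C y -> G (2^-1 *: (x + y)) -> G x.
Proof.
move=> [_ [_ [_ mid]]] Cx Cy /(mid x y Cx Cy)/(_ 1 ler01 (lexx _)).
by rewrite subrr scale0r scale1r addr0.
Qed.

Lemma face_midpointr C G x y :
  is_face C G -> C x -> C y -> G (2^-1 *: (x + y)) -> G y.
Proof. by move=> fG Cx Cy; rewrite addrC; exact: face_midpointl fG Cy Cx. Qed.

Section FaceOfCone.
Variables C G : set 'rV[R]_n.
Hypotheses (cC : convex_cone C) (fG : is_face C G).

Let GC : G `<=` C. Proof. by case: fG. Qed.

Let half_double x : 2^-1 *: (0 + 2 *: x) = x :> 'rV[R]_n.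
Proof. by rewrite add0r scalerA mulVf ?scale1r // pnatr_eq0. Qed.

Lemma face0 : G 0.
Proof.
have [C0 [_ CZ]] := cC; have [_ [[g Gg] _]] := fG.
apply: (face_midpointl fG C0 (CZ 2 g (ler0n _ 2) (GC Gg))).
by rewrite half_double.
Qed.

Lemma face_double x : G x -> G (2 *: x).
Proof.
move=> Gx; have [C0 [_ CZ]] := cC.
apply: (face_midpointr fG C0 (CZ 2 x (ler0n _ 2) (GC Gx))).
by rewrite half_double.
Qed.

Lemma face_cone : convex_cone G.
Proof.
have [_ [_ [cvG _]]] := fG.
have Gsc01 t x : G x -> 0 <= t -> t <= 1 -> G (t *: x).
  by move=> Gx t0 t1; have := cvG x 0 t Gx face0 t0 t1; rewrite scaler0 addr0.
split; first exact: face0.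
split=> [x y Gx Gy|t x t0 Gx].
  have Gm : G (2^-1 *: (x + y)).
    have half : 1 - 2^-1 = 2^-1 :> R by rewrite {1}(splitr 1) mul1r addrK.
    by rewrite scalerDr -{2}half; apply: cvG; rewrite ?invr_ge0 ?invf_le1 ?ler1n.
  by have := face_double Gm; rewrite scalerA mulfV ?pnatr_eq0 // scale1r.
have G2 m : G (2 ^+ m *: x).
  by elim: m => [|m IH]; rewrite ?expr0 ?scale1r // exprS -scalerA; exact: face_double.
have [m tm] : exists m, t <= 2 ^+ m.
  exists (Num.trunc t).+1; apply: le_trans (ltW (truncnS_gt t)) _.
  by rewrite -natrX ler_nat ltnW // ltn_expl.
have pos2m : 0 < 2 ^+ m :> R by rewrite exprn_gt0.
rewrite -[t](divfK (lt0r_neq0 pos2m)) -scalerA; apply: Gsc01 => //.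
  by rewrite divr_ge0 // ltW.
by rewrite ler_pdivrMr // mul1r.
Qed.

Lemma face_span z : C z -> Defs.span G z -> G z.
Proof.
move=> Cz [k [c [w [Gw zE]]]].
have [C0 [CD CZ]] := cC; have [G0 [GD GZ]] := face_cone.
pose s := (1 + \sum_(i < k) `|c i|)^-1.
have s0 : 0 < s by rewrite invr_gt0 ltr_wpDr // sumr_ge0.
have sc i : s * c i <= 1.
  rewrite mulrC ler_pdivrMr ?ltr_wpDr ?sumr_ge0 // mul1r.
  apply: le_trans (ler_norm _) _; rewrite (bigD1 i) //= addrCA lerDl.
  by rewrite addr_ge0 ?sumr_ge0.
(* [s z] and [g0 - s z] lie in [C] and average to [g0 / 2], a point of [G]. *)
pose g0 := \sum_(i < k) 1 *: w i.
have Gg0 : G g0 by apply: cone_sum.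
have Grest : G (g0 - s *: z).
  rewrite (_ : _ - _ = \sum_(i < k) (1 - s * c i) *: w i).
    by apply: cone_sum => // i; rewrite subr_ge0.
  by rewrite zE scaler_sumr -sumrB; apply: eq_bigr => i _; rewrite scalerBl scalerA.
have Gsz : G (s *: z).
  apply: (face_midpointl fG (CZ _ _ (ltW s0) Cz) (GC Grest)).
  by rewrite addrC subrK; apply: GZ; rewrite ?invr_ge0.
have := GZ s^-1 _ _ Gsz; rewrite scalerA mulVf ?lt0r_neq0 // scale1r; apply.
by rewrite invr_ge0 ltW.
Qed.

Lemma face_eq_dimS H : H `<=` C -> G `<=` H -> dimS G = dimS H -> H `<=` G.
Proof.
move=> HC GH dGH z Hz; apply: face_span; first exact: HC.
have [A [GA [rkA AG]]] := dimS_spec G; have [B [_ [rkB BH]]] := dimS_spec H.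
have AB : (A <= B)%MS by apply/row_subP => i; apply: BH; exact: GH.
have /andP [_ BA] : (A == B)%MS by rewrite -(mxrank_leqif_eq AB) rkA rkB dGH.
by apply/(span_submxP GA AG); exact: submx_trans (BH _ Hz) BA.
Qed.

End FaceOfCone.

Lemma face_exposed C E e : convex_cone C -> is_face C E ->
  (forall z, E z -> 0 <= dot e z) -> is_face C (E `&` [set z | dot e z = 0]).
Proof.
move=> cC fE eE; have [EC [_ [cvE _]]] := fE; have [E0 _] := face_cone cC fE.
split; first by move=> x [/EC].
split; first by exists 0; split; rewrite //= dot0r.
split.
  move=> x y t [Ex ex] [Ey ey] t0 t1; split; first exact: cvE.
  by rewrite /= dotDr !dotZr ex ey !mulr0 addr0.
move=> x y Cx Cy [Em em] t t0 t1.
have Ex := face_midpointl fE Cx Cy Em; have Ey := face_midpointr fE Cx Cy Em.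
move: em; rewrite /= dotZr dotDr => /eqP; rewrite mulf_eq0 invr_eq0 pnatr_eq0 /=.
move=> /eqP exy; have ex := eE _ Ex; have ey := eE _ Ey.
have [ex0 ey0] : dot e x = 0 /\ dot e y = 0 by split; lra.
split; first by have [_ [_ [_ ]]] := fE; apply.
by rewrite /= dotDr !dotZr ex0 ey0 !mulr0 addr0.
Qed.

Lemma span_perp_self E e : Defs.span E e -> perp E e -> dot e e = 0.
Proof.
move=> [k [c [w [Ew ->]]]] eE.
by rewrite dot_suml big1 // => i _; rewrite dotC eE ?mulr0.
Qed.

End Faces.

Section FaceDimensions.
Variables (R : realType) (n : nat).

Lemma face_dims_gap (C G : set 'rV[R]_n) (i : nat) :
  (i.+1 < size (face_dims C))%N -> is_face C G ->
  (ndim C i <= dimS G <= ndim C i.+1)%N ->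
  dimS G = ndim C i \/ dimS G = ndim C i.+1.
Proof.
move=> isz fG /andP [im mi1]; rewrite /ndim in im mi1 *.
set m := dimS G in im mi1 *.
set s := face_dims C in isz im mi1 *.
have ss : sorted ltn s by apply: sorted_filter; [exact: ltn_trans | exact: iota_ltn_sorted].
have ms : m \in s.
  rewrite mem_filter mem_iota add0n ltnS dimS_le leq0n !andbT.
  by apply/asboolP; exists G.
have lt_nth := sorted_ltn_nth ltn_trans 0%N ss.
have ps := ms; rewrite -index_mem in ps.
move: (nth_index 0%N ms); set p := index m s in ps * => pm.
case: (ltngtP p i) => [pi|ip|pi]; last by left; rewrite -pm pi.
  by move: im; rewrite leqNgt -pm lt_nth ?pi // inE ltnW.
case: (ltngtP p i.+1) => [pi1|ip1|pi1]; last by right; rewrite -pm pi1.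
  by move: pi1; rewrite ltnS leqNgt ip.
by move: mi1; rewrite leqNgt -pm lt_nth ?ip1.
Qed.

End FaceDimensions.

Definition unit_generator (R : realType) (n : nat) (E G : set 'rV[R]_n) (x : 'rV[R]_n) :=
  dot x x = 1 /\
  forall y, (perp G y /\ dualspan E y) <-> exists t : R, 0 <= t /\ y = t *: x.

Section UnitGenerators.
Variables (R : realType) (n : nat).
Implicit Types (C E G : set 'rV[R]_n) (x : 'rV[R]_n).

Lemma eF_cases E G : unit_generator E G (eF E G) \/ eF E G = 0.
Proof.
have [ex|nex] := pselect (exists x, unit_generator E G x).
  by left; exact: (xgetPex 0 ex).
by right; apply: xgetPN => x xG; apply: nex; exists x.
Qed.

Lemma unit_generator_mem E G x :
  unit_generator E G x -> [/\ perp G x, Defs.dual E x & Defs.span E x].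
Proof.
move=> [_ ray]; have [? [? ?]] : perp G x /\ dualspan E x.
  by apply/ray; exists 1; rewrite scale1r.
by [].
Qed.

Lemma eset_unit_generator C j E x : eset C j E x -> x != 0 ->
  exists2 G, calP C j (E, G) & unit_generator E G x.
Proof.
move=> [G cG <-] x0; exists G => //.
by case: (eF_cases E G) => // e0; rewrite e0 eqxx in x0.
Qed.

Lemma unit_generator_dot_le0 E G H x y g : G `<=` E ->
  unit_generator E G x -> unit_generator E H y -> G g -> dot (x - y) g <= 0.
Proof.
move=> GE xG yH Gg; have [xperp _ _] := unit_generator_mem xG.
have [_ yE _] := unit_generator_mem yH.
by rewrite dotBl xperp // sub0r oppr_le0 yE //; exact: GE.
Qed.

Lemma eset_small_eq0 C j E x : eset C j E x -> `|x| < n.+1%:R^-1 -> x = 0.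
Proof.
move=> Sx xsmall; apply/eqP; apply: contraT => x0.
have [G _ [x1 _]] := eset_unit_generator Sx x0.
have := dotxx_le_norm x; rewrite x1.
have : `|x| * n.+1%:R < 1 by rewrite -ltr_pdivlMr ?ltr0n // div1r.
have N0 : 0 <= n%:R :> R by [].
have := normr_ge0 x; rewrite -natr1 expr2; nra.
Qed.

End UnitGenerators.

Lemma closed_cluster (T : topologicalType) (F : set_system T) (A : set T) p :
  closed A -> F A -> cluster F p -> A p.
Proof.
by move=> /closure_id cA FA; rewrite clusterE => /(_ A FA); rewrite -cA.
Qed.

Section ClusterPoints.
Variables (R : realType) (n : nat).

Lemma cluster_dot_eq0 (u : nat -> 'rV[R]_n) uu w : cluster (u @ \oo) uu ->
  (forall eta, 0 < eta -> \forall i \near \oo, `|dot (u i) w| <= eta) -> dot uu w = 0.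
Proof.
move=> cl small; apply/normr0_eq0/le_anti; rewrite normr_ge0 andbT.
apply/ler_addgt0Pr => eta eta0; rewrite add0r.
have near_u : (u @ \oo) [set v | `|dot v w| <= eta] by exact: small.
apply: (closed_cluster _ near_u cl).
apply: (@preimage_closed _ R (fun v => `|dot v w|) [set r | r <= eta]); last exact: closed_le.
move=> v _; apply: (@continuous_comp _ _ _ (fun v => dot v w) Num.norm).
  exact: continuous_dotl.
exact: (@norm_continuous _ R^o).
Qed.

Lemma compact_unit_sphere : compact [set v : 'rV[R]_n | dot v v = 1].
Proof.
apply: bounded_closed_compact.
  by exists 1; split => // M M1 v /unit_norm_le1 v1; apply: le_trans v1 (ltW M1).
apply: (@preimage_closed _ R^o (fun v => dot v v) [set 1]); last exact: closed_eq.
by move=> v _; apply: continuous_dot => x; exact: (@cvg_id _ (nbhs x)).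
Qed.

End ClusterPoints.

Section FellTopology.
Variables (R : realType) (n : nat).
Implicit Types (A G : set 'rV[R]_n) (P : set (set 'rV[R]_n)).

Lemma fell_open_meets (U : set 'rV[R]_n) : open U -> fell_open [set A | A `&` U !=set0].
Proof.
move=> oU A AU; exists 1%N, (fun=> [set B | B `&` U !=set0]).
by split => [_|]; [right; exists U | split => [_|B /(_ ord0)]].
Qed.

Lemma fell_compact_uniform P (Q : R -> set 'rV[R]_n -> Prop) : fell_compact P ->
  (forall d d' G, d' <= d -> Q d G -> Q d' G) ->
  (forall A, P A -> exists N d, [/\ fell_open N, N A, 0 < d & forall G, N G -> Q d G]) ->
  exists2 d, 0 < d & forall G, P G -> Q d G.
Proof.
move=> fcP Qanti local.
have /choice [f fP] : forall A, exists p : set (set 'rV[R]_n) * R,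
    [/\ fell_open p.1, P A -> p.1 A, 0 < p.2 & forall G, p.1 G -> Q p.2 G].
  move=> A; have [PA|nPA] := pselect (P A); last first.
    by exists (set0, 1); split=> // ? [].
  by have [N [d [? ? ? ?]]] := local A PA; exists (N, d).
have fopen A : fell_open (f A).1 by case: (fP A).
have fcov A : P A -> (f A).1 A by case: (fP A).
have [k [h cover]] :=
  fcP _ _ fopen (fun A PA => ex_intro (fun B => (f B).1 A) A (fcov A PA)).
exists (\big[Order.min/1]_(m < k) (f (h m)).2).
  apply: (big_ind (fun d => 0 < d)) => // [a b a0 b0|m _]; first by rewrite lt_min a0.
  by case: (fP (h m)).
move=> G /cover [m hmG]; have [_ _ _ Qm] := fP (h m).
by apply: Qanti (Qm _ hmG); exact: bigmin_le.
Qed.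

End FellTopology.

Lemma not_injective_near_sequences (R : realType) (V : normedModType R) (T : Type)
    (e : V) (S : set V) (f : V -> T) :
  ~ (exists U, nbhs e U /\
      forall x y, U x -> S x -> U y -> S y -> f x = f y -> x = y) ->
  exists x y : nat -> V, [/\ x @ \oo --> e, y @ \oo --> e &
    forall i, [/\ S (x i), S (y i), f (x i) = f (y i) & x i != y i]].
Proof.
move=> noU.
have /choice [p pP] : forall i, exists p : V * V,
    [/\ `|e - p.1| < harmonic i, `|e - p.2| < harmonic i &
        [/\ S p.1, S p.2, f p.1 = f p.2 & p.1 != p.2]].
  move=> i; apply: contrapT => nop; apply: noU.
  exists (ball e (harmonic i)); split; first exact/nbhsx_ballx/harmonic_gt0.
  move=> x y ex Sx ey Sy fxy; apply: contrapT => /eqP xy; apply: nop.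
  by exists (x, y); rewrite -!ball_normE in ex ey.
have harmonic_cvg (z : nat -> V) : (forall i, `|e - z i| < harmonic i) -> z @ \oo --> e.
  move=> ez; apply/cvgrPdist_lt => eta eta0.
  have /cvgrPdist_lt/(_ eta eta0) := @cvg_harmonic R; apply: filterS => i.
  by rewrite sub0r normrN ger0_norm ?harmonic_ge0 //; exact: lt_trans.
exists (fun i => (p i).1), (fun i => (p i).2).
by split; [apply: harmonic_cvg => i | apply: harmonic_cvg => i | move=> i]; case: (pP i).
Qed.

Section GeneratorPair.
Variables (R : realType) (n : nat) (C E F : set 'rV[R]_n) (j : nat).
Hypotheses (cC : convex_cone C) (j1 : (1 <= j)%N) (jd : (j <= dd C)%N).
Hypotheses (EF : calP C j (E, F)) (fcP : fell_compact (Pj C j)).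
Local Notation e := (eF E F).
Hypothesis eEF : unit_generator E F e.

Let fE : is_face C E. Proof. by case: EF => [[]]. Qed.
Let fF : is_face C F. Proof. by case: EF => _ [[]]. Qed.
Let FE : F `<=` E. Proof. by case: EF => _ []. Qed.
Let EC : E `<=` C. Proof. by case: fE. Qed.

Lemma unit_generator_exposes z : E z -> dot e z = 0 -> F z.
Proof.
have [eperp eE espan] := unit_generator_mem eEF.
(* [F'] is a face between [F] and [E], and no face dimension lies strictly between
   those of [F] and [E]. *)
pose F' := E `&` [set z | dot e z = 0].
have fF' : is_face C F' by apply: face_exposed.
have FF' : F `<=` F' by move=> y Fy; split; [exact: FE | exact: eperp].
have F'E : F' `<=` E by move=> y [].
have [[_ dE] [[_ dF] _]] := EF; rewrite /= in dE dF.
set i := (dd C - j)%N in dF.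
have dEi : dimS E = ndim C i.+1 by rewrite dE; congr ndim; rewrite /i; lia.
have isz : (i.+1 < size (face_dims C))%N.
  by move: jd; rewrite /i /dd; case: (size (face_dims C)) => [|sz] /=; lia.
have dimsF' : (ndim C i <= dimS F' <= ndim C i.+1)%N by rewrite -dF -dEi !le_dimS.
have [dF'|dF'] := face_dims_gap isz fF' dimsF'.
  move=> Ez ez; apply: (face_eq_dimS cC fF (H := F')) => //.
    by move=> y [/EC].
  by rewrite dF.
have EF' : E `<=` F' by apply: (face_eq_dimS cC fF' EC F'E); rewrite dF' dEi.
have : dot e e = 0 by apply: (span_perp_self espan) => y /EF' [].
by case: eEF => -> _ /eqP; rewrite oner_eq0.
Qed.

Lemma unit_generator_pos a : E a -> ~ F a -> 0 < dot e a.
Proof.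
move=> Ea nFa; have [_ eE _] := unit_generator_mem eEF.
rewrite lt_def eE // andbT; apply/eqP => ea.
exact/nFa/unit_generator_exposes.
Qed.

Section NearbyFaces.
Variables (f0 : 'rV[R]_n) (eps : R).
Hypotheses (Ff0 : F f0) (eps0 : 0 < eps).

Let meets_near d G := forall x, calP C j (E, G) -> unit_generator E G x ->
  `|x - e| < d -> exists2 g, G g & `|f0 - g| < eps.

Let local_cover A := exists N d,
  [/\ fell_open N, N A, 0 < d & forall G, N G -> meets_near d G].

Let cover_meeting_ball A : A `&` ball f0 eps !=set0 -> local_cover A.
Proof.
move=> Af0; exists [set B | B `&` ball f0 eps !=set0], 1.
split => //; first exact/fell_open_meets/ball_open.
by move=> G [g [Gg]]; rewrite -ball_normE => fg x _ _ _; exists g.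
Qed.

Let cover_outside_span A a : A a -> ~ Defs.span E a -> local_cover A.
Proof.
move=> Aa nEa; exists [set B | B `&` ~` Defs.span E !=set0], 1.
split => //; first exact/fell_open_meets/closed_openC/closed_span.
  by exists a.
by move=> G [g [Gg nEg]] x [_ [_ GE]] _ _; exfalso; apply/nEg/mem_span/GE.
Qed.

(* Faces meeting a small ball around [a] contain points [g] with [dot x g > 0] for
   all [x] near [e], so no such [x] generates their ray. *)
Let cover_off_face A a : A a -> E a -> ~ F a -> local_cover A.
Proof.
move=> Aa Ea nFa; have ea := unit_generator_pos Ea nFa; set c := dot e a in ea.
have [d d0 near_e] : exists2 d, 0 < d & forall x, `|e - x| < d -> c / 2 < dot x a.
  have /cvgrPdist_lt/(_ (c / 2) (divr_gt0 ea (ltr0n _ 2)))/nbhs_normP [d d0 dP] :=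
    @continuous_dotl _ _ a e.
  exists d => // x /dP /=; rewrite ltr_distlC -/c => /andP [+ _]; lra.
pose r := c / 2 / n.+1%:R.
have r0 : 0 < r by rewrite !divr_gt0.
have nr : n%:R * r < c / 2.
  by rewrite /r mulrCA gtr_pMr ?divr_gt0 // ltr_pdivrMr // mul1r ltr_nat.
exists [set B | B `&` ball a r !=set0], d; split => //.
- exact/fell_open_meets/ball_open.
- by exists a; split => //; exact: ballxx.
move=> G [g [Gg]]; rewrite -ball_normE /= => ag x _ xG xe; exfalso.
have [xperp _ _] := unit_generator_mem xG; have [x1 _] := xG.
have := ler_norm_dot_unit (g - a) x1; rewrite dotBr xperp // sub0r normrN.
have : n%:R * `|g - a| <= n%:R * r by rewrite ler_wpM2l // distrC ltW.
have := near_e x; rewrite distrC => /(_ xe); rewrite ler_norml; lra.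
Qed.

Let local_cover_Pj A : Pj C j A -> local_cover A.
Proof.
move=> [fA dA].
have [Af0|Aoff] := pselect (A `&` ball f0 eps !=set0); first exact: cover_meeting_ball.
have [a Aa nFa] : exists2 a, A a & ~ F a.
  apply: contrapT => AF; apply: Aoff; exists f0; split; last exact: ballxx.
  apply: (face_eq_dimS cC fA (H := F)) => //; first by case: fF.
    by move=> z Az; apply: contrapT => nFz; apply: AF; exists z.
  by have [_ [[_ dF] _]] := EF; rewrite dA dF.
have [Ea|nEa] := pselect (E a); first exact: cover_off_face Aa Ea nFa.
apply: (cover_outside_span Aa) => /(face_span cC fE) Ea; apply/nEa/Ea.
by have [AsubC _] := fA; exact: AsubC Aa.
Qed.

Lemma faces_near_generator_meet_ball : exists2 d, 0 < d &
  forall G x, calP C j (E, G) -> unit_generator E G x -> `|x - e| < d ->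
    exists2 g, G g & `|f0 - g| < eps.
Proof.
have [|d d0 dP] := fell_compact_uniform fcP _ local_cover_Pj.
  by move=> d d' G d'd Qd x EG xG xe; exact: Qd x EG xG (lt_le_trans xe d'd).
exists d => // G x EG; have PG : Pj C j G by case: EG => _ [].
exact: dP PG x EG.
Qed.

End NearbyFaces.

Section CollidingSequences.
Variables x y : nat -> 'rV[R]_n.
Hypotheses (x_cvg : x @ \oo --> e) (y_cvg : y @ \oo --> e).
Hypotheses
  (x_gen : \forall i \near \oo, exists2 G, calP C j (E, G) & unit_generator E G (x i))
  (y_gen : \forall i \near \oo, exists2 H, calP C j (E, H) & unit_generator E H (y i)).
Hypotheses (xy_proj : forall i, oproj (Ehalf E F) (x i) = oproj (Ehalf E F) (y i))
  (xy_neq : forall i, x i != y i).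

Let s i := (Num.sqrt (dot (x i - y i) (x i - y i)))^-1.
Let u i := s i *: (x i - y i).

Let s_ge0 i : 0 <= s i. Proof. by rewrite invr_ge0 sqrtr_ge0. Qed.

Let u_unit i : dot (u i) (u i) = 1.
Proof. by apply: normalize_unit; rewrite subr_eq0. Qed.

Let u_perp_Ehalf i w : Ehalf E F w -> dot (u i) w = 0.
Proof.
have [M EM] := Ehalf_mx E F.
by move=> Ew; rewrite dotZl (oproj_eq_perp EM (xy_proj i) Ew) mulr0.
Qed.

Let u_span : \forall i \near \oo, Defs.span E (u i).
Proof.
have [A EA] := span_mx E.
near=> i; have [G _ /unit_generator_mem [_ _ xE]] : exists2 G, calP C j (E, G) &
  unit_generator E G (x i) by near: i.
have [H _ /unit_generator_mem [_ _ yE]] : exists2 H, calP C j (E, H) &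
  unit_generator E H (y i) by near: i.
apply/EA/scalemx_sub/addmx_sub; first exact/EA.
by rewrite -scaleN1r; apply/scalemx_sub/EA.
Unshelve. all: by end_near.
Qed.

(* [u i] is orthogonal to [x i + y i], which tends to [2 e]. *)
Let u_dot_e_small eta : 0 < eta -> \forall i \near \oo, `|dot (u i) e| <= eta.
Proof.
move=> eta0; have eta'0 : 0 < eta / n.+1%:R by rewrite divr_gt0.
near=> i.
have [G _ [x1 _]] : exists2 G, calP C j (E, G) & unit_generator E G (x i) by near: i.
have [H _ [y1 _]] : exists2 H, calP C j (E, H) & unit_generator E H (y i) by near: i.
have ex : `|e - x i| < eta / n.+1%:R by near: i; exact: cvgr_dist_lt.
have ey : `|e - y i| < eta / n.+1%:R by near: i; exact: cvgr_dist_lt.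
have sum0 : dot (u i) (x i + y i) = 0.
  by rewrite dotZl dotBl !dotDr x1 y1 (dotC (y i)) [dot _ _ + 1]addrC subrr mulr0.
have := ler_norm_dot_unit_small (u_unit i) ex.
have := ler_norm_dot_unit_small (u_unit i) ey.
move: sum0; rewrite !dotBr dotDr !ler_norml => s0 /andP [? ?] /andP [? ?].
by apply/andP; split; lra.
Unshelve. all: by end_near.
Qed.

(* [u i] is [<= 0] on the face of [x i] and [>= 0] on that of [y i], and both faces
   pass close to [f0]. *)
Let u_dot_F_small f0 : F f0 ->
  forall eta, 0 < eta -> \forall i \near \oo, `|dot (u i) f0| <= eta.
Proof.
move=> Ff0 eta eta0; have eps0 : 0 < eta / n.+1%:R by rewrite divr_gt0.
have [d d0 meet] := faces_near_generator_meet_ball Ff0 eps0.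
have near_f0 z g : `|f0 - g| < eta / n.+1%:R -> dot z z = 1 ->
    `|dot z f0 - dot z g| <= eta.
  by move=> fg z1; rewrite -dotBr; exact: ler_norm_dot_unit_small.
near=> i.
have [G EG xG] : exists2 G, calP C j (E, G) & unit_generator E G (x i) by near: i.
have [H EH yH] : exists2 H, calP C j (E, H) & unit_generator E H (y i) by near: i.
have [g Gg fg] : exists2 g, G g & `|f0 - g| < eta / n.+1%:R.
  by apply: meet EG xG _; rewrite distrC; near: i; exact: cvgr_dist_lt.
have [h Hh fh] : exists2 h, H h & `|f0 - h| < eta / n.+1%:R.
  by apply: meet EH yH _; rewrite distrC; near: i; exact: cvgr_dist_lt.
have ug : dot (u i) g <= 0.
  rewrite dotZl mulr_ge0_le0 ?s_ge0 //; apply: unit_generator_dot_le0 xG yH Gg.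
  by case: EG => _ [].
have uh : 0 <= dot (u i) h.
  rewrite dotZl mulr_ge0 ?s_ge0 // -opprB dotNl oppr_ge0.
  by apply: unit_generator_dot_le0 yH xG Hh; case: EH => _ [].
have := near_f0 _ _ fg (u_unit i); have := near_f0 _ _ fh (u_unit i).
rewrite !ler_norml => /andP [? ?] /andP [? ?].
by apply/andP; split; lra.
Unshelve. all: by end_near.
Qed.

Lemma no_colliding_generator_sequences : False.
Proof.
have [uu [uu1 cl]] : [set v | dot v v = 1] `&` cluster (u @ \oo) !=set0.
  apply: (@compact_unit_sphere R n (u @ \oo)).
  by apply: (@nearW _ \oo) => i; exact: u_unit.
have uuE : Defs.span E uu := closed_cluster (@closed_span _ _ E) u_span cl.
have uuF : perp F uu := fun f Ff => cluster_dot_eq0 cl (u_dot_F_small Ff).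
have uue : dot uu e = 0 := cluster_dot_eq0 cl u_dot_e_small.
have : dot uu uu = 0.
  apply: (cluster_dot_eq0 cl) => eta eta0; apply: nearW => i.
  by rewrite u_perp_Ehalf ?normr0 ?ltW.
by rewrite uu1 => /eqP; rewrite oner_eq0.
Qed.

End CollidingSequences.

Lemma oproj_Ehalf_injective_near : exists U, nbhs e U /\
  forall x y, U x -> eset C j E x -> U y -> eset C j E y ->
    oproj (Ehalf E F) x = oproj (Ehalf E F) y -> x = y.
Proof.
apply: contrapT => /not_injective_near_sequences [x [y [x_cvg y_cvg xyP]]].
have e0 : 0 < `|e|.
  rewrite normr_gt0; apply/eqP => e0; case: eEF; rewrite e0 dot0l => /eqP.
  by rewrite eq_sym oner_eq0.
have gen z : z @ \oo --> e -> (forall i, eset C j E (z i)) ->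
    \forall i \near \oo, exists2 G, calP C j (E, G) & unit_generator E G (z i).
  move=> /cvgrPdist_lt/(_ _ e0) near_e Sz; apply: filterS near_e => i ez.
  by apply: eset_unit_generator (Sz i) _; apply: contraTneq ez => ->; rewrite subr0 ltxx.
apply: (no_colliding_generator_sequences x_cvg y_cvg).
- by apply: gen x_cvg _ => i; case: (xyP i).
- by apply: gen y_cvg _ => i; case: (xyP i).
- by move=> i; case: (xyP i).
- by move=> i; case: (xyP i).
Qed.

End GeneratorPair.

Theorem mainTheorem14 (R : realType) (n : nat) (Omega : set 'rV[R]_n) :
  convex_cone Omega -> pointed_set Omega -> solid Omega -> closed Omega ->
  facially_compact (dual Omega) -> locally_smooth (dual Omega) ->
  forall j : nat, (1 <= j)%N -> (j <= dd (dual Omega))%N ->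
  forall E F : set 'rV[R]_n, calP (dual Omega) j (E, F) ->
  exists U : set 'rV[R]_n, nbhs (eF E F) U /\
    forall x y, U x -> eset (dual Omega) j E x -> U y -> eset (dual Omega) j E y ->
      oproj (Ehalf E F) x = oproj (Ehalf E F) y -> x = y.
Proof.
move=> _ _ _ _ fcomp _ j j1 jd E F EF.
have [eEF|e0] := eF_cases E F.
  exact: oproj_Ehalf_injective_near (convex_cone_dual Omega) j1 jd EF (fcomp j jd) eEF.
(* [eF E F] is the junk value [0]; the points of [eset] near it are junk values too. *)
exists (ball (eF E F) n.+1%:R^-1); split; first by apply: nbhsx_ballx; rewrite invr_gt0.
have small z : ball (eF E F) n.+1%:R^-1 z -> `|z| < n.+1%:R^-1.
  by rewrite -ball_normE /= e0 sub0r normrN.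
move=> x y /small x_small Sx /small y_small Sy _.
by rewrite (eset_small_eq0 Sx x_small) (eset_small_eq0 Sy y_small).
Qed.
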